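(* Let $A$, $c$, $B$ be as in the context. (i) A vector $u\in\mathbb N^n$ lies in $\mathcal O_c$ if and only if $Q_u\cap\mathbb Z^{n-d}=\{0\}$. (ii) If $u\in\mathcal O_c$ and $\tau$ is a face of $\Delta_c$, then the group relaxation $G^\tau(Au)$ solves $IP_{A,c}(Au)$ if and only if $Q_u^{\bar\tau}\cap\mathbb Z^{n-d}=\{0\}$.
   Context: $A\in\mathbb Z^{d\times n}$ has rank $d$, columns $a_1,\dots,a_n$, $cone(A)$ pointed, $\{x\in\mathbb R^n_{\ge0}:Ax=0\}=\{0\}$, $\mathbb ZA=\mathbb Z^d$, $\mathbb NA=\{Au:u\in\mathbb N^n\}$. For $c\in\mathbb Z^n$ and $b\in\mathbb NA$, $IP_{A,c}(b)=\min\{c\cdot x: Ax=b,\ x\in\mathbb N^n\}$. The regular triangulation $\Delta_c$ is the collection of $\sigma\subseteq\{1,\dots,n\}$ for which some $y\in\mathbb R^d$ has $y\cdot a_j=c_j$ ($j\in\sigma$), $y\cdot a_j<c_j$ ($j\notin\sigma$). $c$ is generic: $\Delta_c$ is a triangulation and every $IP_{A,c}(b)$, $b\in\mathbb NA$, has a unique optimal solution. $\mathcal O_c\subseteq\mathbb N^n$ is the set of optimal solutions of all $IP_{A,c}(b)$, $b\in\mathbb NA$. For a maximal face $\sigma$ of $\Delta_c$ let $\tilde c_{\bar\sigma}=c_{\bar\sigma}-c_\sigma A_\sigma^{-1}A_{\bar\sigma}$, and for a face $\tau\subseteq\sigma$ let $\tilde c_{\bar\tau}$ be its extension by zeros to $\mathbb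 R^{|\bar\tau|}$. The group relaxation $G^\tau(b)$ is $\min\{\tilde c_{\bar\tau}\cdot x_{\bar\tau}: A_\tau x_\tau+A_{\bar\tau}x_{\bar\tau}=b,\ x_{\bar\tau}\ge0,\ (x_\tau,x_{\bar\tau})\in\mathbb Z^n\}$; it solves $IP_{A,c}(b)$ if its optimal solution is non-negative. $B\in\mathbb Z^{n\times(n-d)}$ has columns forming a basis of $\{x\in\mathbb Z^n:Ax=0\}$; $B^{\bar\tau}$ deletes the rows of $B$ indexed by $\tau$, and $\pi_\tau:\mathbb R^n\to\mathbb R^{|\bar\tau|}$ deletes coordinates indexed by $\tau$. $Q_u=\{z\in\mathbb R^{n-d}: Bz\le u,\ (-cB)z\le0\}$ and $Q_u^{\bar\tau}=\{z\in\mathbb R^{n-d}: B^{\bar\tau}z\le\pi_\tau(u),\ (-cB)z\le0\}$. *)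

From HB Require Import structures.
From mathcomp Require Import all_boot all_order all_algebra.
From mathcomp Require Import reals.
Set Implicit Arguments. Unset Strict Implicit. Unset Printing Implicit Defensive.
Import Order.TTheory GRing.Theory Num.Theory.
Local Open Scope ring_scope.

Section IPDefs.
Variables (R : realType) (d n : nat).
Variables (A : 'M[int]_(d, n)) (c : 'rV[int]_n).

Definition toR {m k : nat} (M : 'M[int]_(m, k)) : 'M[R]_(m, k) :=
  map_mx (fun z : int => z%:~R) M.

Definition nonneg_vec (u : 'cV[int]_n) : Prop := forall i, 0 <= u i 0.

Definition cdot (x : 'cV[int]_n) : int := (c *m x) 0 0.

Definition cone_pointed : Prop :=
  forall y : 'cV[R]_d,
    (exists l : 'cV[R]_n, (forall i, 0 <= l i 0) /\ y = toR A *m l) ->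
    (exists m : 'cV[R]_n, (forall i, 0 <= m i 0) /\ - y = toR A *m m) ->
    y = 0.

Definition nonneg_kernel_trivial : Prop :=
  forall x : 'cV[R]_n, (forall i, 0 <= x i 0) -> toR A *m x = 0 -> x = 0.

Definition lattice_full : Prop :=
  forall b : 'cV[int]_d, exists x : 'cV[int]_n, A *m x = b.

Definition in_NA (b : 'cV[int]_d) : Prop :=
  exists u : 'cV[int]_n, nonneg_vec u /\ A *m u = b.

Definition IP_optimal (b : 'cV[int]_d) (u : 'cV[int]_n) : Prop :=
  [/\ nonneg_vec u, A *m u = b &
      forall x : 'cV[int]_n, nonneg_vec x -> A *m x = b -> cdot u <= cdot x].

Definition IP_unique_opt (b : 'cV[int]_d) : Prop :=
  (exists u, IP_optimal b u) /\
  (forall u u', IP_optimal b u -> IP_optimal b u' -> u = u').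

Definition Oc (u : 'cV[int]_n) : Prop :=
  exists b, in_NA b /\ IP_optimal b u.

Definition in_Delta (s : {set 'I_n}) : Prop :=
  exists y : 'rV[R]_d, forall j : 'I_n,
    (j \in s -> (y *m toR A) 0 j = (c 0 j)%:~R) /\
    (j \notin s -> (y *m toR A) 0 j < (c 0 j)%:~R).

Definition Asub (s : {set 'I_n}) : 'M[R]_(d, #|s|) :=
  colsub (fun k : 'I_#|s| => enum_val k) (toR A).
Definition csub (s : {set 'I_n}) : 'rV[R]_#|s| :=
  colsub (fun k : 'I_#|s| => enum_val k) (toR c).

(* Delta_c is a triangulation: every cell is simplicial, i.e. the columns
   a_j, j in sigma, are linearly independent *)
Definition Delta_triangulation : Prop :=
  forall s, in_Delta s -> \rank (Asub s) = #|s|.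

Definition generic : Prop :=
  Delta_triangulation /\ forall b, in_NA b -> IP_unique_opt b.

Definition maximal_face (s : {set 'I_n}) : Prop :=
  in_Delta s /\ forall s', in_Delta s' -> s \subset s' -> s' = s.

(* A_sigma and c_sigma as a d x d matrix / length-d row (for a maximal face
   one has #|sigma| = d, in which case conform_mx is the identity cast) *)
Definition Asq (s : {set 'I_n}) : 'M[R]_d := conform_mx 1%:M (Asub s).
Definition csq (s : {set 'I_n}) : 'rV[R]_d := conform_mx 0 (csub s).

(* tilde c for the maximal face sigma, as a vector indexed by all of [n]:
   tilde c_j = c_j - (c_sigma A_sigma^{-1} A_{bar sigma})_j for j notin sigma,
   and 0 for j in sigma (extension by zeros). *)
Definition ctilde (s : {set 'I_n}) (j : 'I_n) : R :=
  if j \in s then 0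
  else (c 0 j)%:~R - (csq s *m invmx (Asq s) *m toR A) 0 j.

Definition Gobj (s t : {set 'I_n}) (x : 'cV[int]_n) : R :=
  \sum_(j | j \notin t) ctilde s j * (x j 0)%:~R.

Definition G_feasible (t : {set 'I_n}) (b : 'cV[int]_d) (x : 'cV[int]_n) : Prop :=
  A *m x = b /\ forall j, j \notin t -> 0 <= x j 0.

Definition G_optimal (s t : {set 'I_n}) (b : 'cV[int]_d) (x : 'cV[int]_n) : Prop :=
  G_feasible t b x /\
  forall x', G_feasible t b x' -> Gobj s t x <= Gobj s t x'.

(* G^tau(b) solves IP_{A,c}(b): its optimal solution is non-negative *)
Definition G_solves (s t : {set 'I_n}) (b : 'cV[int]_d) : Prop :=
  (exists x, G_optimal s t b x) /\
  (forall x, G_optimal s t b x -> nonneg_vec x).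

Definition lattice_basis (B : 'M[int]_(n, n - d)) : Prop :=
  A *m B = 0 /\
  forall x : 'cV[int]_n, A *m x = 0 ->
    exists! z : 'cV[int]_(n - d), x = B *m z.

Definition Q (B : 'M[int]_(n, n - d)) (u : 'cV[int]_n) (z : 'cV[R]_(n - d)) : Prop :=
  (forall i, (toR B *m z) i 0 <= (u i 0)%:~R) /\
  ((- (toR c *m toR B)) *m z) 0 0 <= 0.

Definition Qbar (B : 'M[int]_(n, n - d)) (t : {set 'I_n}) (u : 'cV[int]_n)
    (z : 'cV[R]_(n - d)) : Prop :=
  (forall i, i \notin t -> (toR B *m z) i 0 <= (u i 0)%:~R) /\
  ((- (toR c *m toR B)) *m z) 0 0 <= 0.

Definition int_points_trivial (P : 'cV[R]_(n - d) -> Prop) : Prop :=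
  forall z : 'cV[int]_(n - d), P (toR z) <-> z = 0.

End IPDefs.

(* Parametrize the kernel lattice by [B]: the integer points [z] of [Q_u^{bar tau}]
   are the lattice points [x = u - B z] of the fibre of [A u] that are nonnegative
   outside [tau] and satisfy [c.x <= c.u], so their triviality says that [u] is the
   unique c-minimum of that set.  For [tau] empty this is optimality in [IP_{A,c}(A u)],
   uniqueness coming from genericity.  For [tau] inside a maximal cell [sigma] with
   lifting vector [y] ([y.a_j = c_j] on [sigma], [< c_j] off it), the objective of
   [G^tau] is [c.x - y.(A x)], so it orders every fibre exactly as [c] does.  Reading
   off [ctilde] needs [#|sigma| = d]; otherwise pushing [y] along a functional that
   vanishes on the columns of [sigma] would reach a larger cell. *)

From HB Require Import structures.
From mathcomp Require Import all_boot all_order all_algebra.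
From mathcomp Require Import reals.
Set Implicit Arguments. Unset Strict Implicit. Unset Printing Implicit Defensive.
Import Order.TTheory GRing.Theory Num.Theory.
Local Open Scope ring_scope.

Lemma toR_mul (R : realType) m k p (M : 'M[int]_(m, k)) (N : 'M[int]_(k, p)) :
  toR R (M *m N) = toR R M *m toR R N.
Proof. exact: map_mxM. Qed.

Lemma toRE (R : realType) m k (M : 'M[int]_(m, k)) i j : toR R M i j = (M i j)%:~R.
Proof. exact: mxE. Qed.

Section Fibers.
Variables (d n : nat) (A : 'M[int]_(d, n)) (c : 'rV[int]_n).

Definition fiber_unique_min (t : {set 'I_n}) (u : 'cV[int]_n) : Prop :=
  forall x, G_feasible A t (A *m u) x -> cdot c x <= cdot c u -> x = u.

Lemma fiber_min_le t u x :
  fiber_unique_min t u -> G_feasible A t (A *m u) x -> cdot c u <= cdot c x.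
Proof. by move=> Hu Fx; case: (leP (cdot c x) (cdot c u)) => [/(Hu x Fx)->|/ltW]. Qed.

Lemma G_feasible0 b x : G_feasible A set0 b x <-> nonneg_vec x /\ A *m x = b.
Proof. by split=> -[H1 H2]; split=> // j; apply: H2; rewrite in_set0. Qed.

Lemma cdotB (x y : 'cV[int]_n) : cdot c (x - y) = cdot c x - cdot c y.
Proof. by rewrite /cdot mulmxBr !mxE. Qed.

Lemma Oc_iff_fiber_unique_min u :
  (forall b, in_NA A b -> IP_unique_opt A c b) -> nonneg_vec u ->
  Oc A c u <-> fiber_unique_min set0 u.
Proof.
move=> Huniq u0; split=> [[b [Hb [_ Au Hopt]]] x /G_feasible0 [x0 Ax] le | Hu].
  apply: (Huniq b Hb).2 (And3 u0 Au Hopt).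
  split=> [||x' x'0 Ax']; [done | by rewrite Ax | exact: le_trans le (Hopt x' x'0 Ax')].
exists (A *m u); split; first by exists u.
by split=> // x x0 Ax; apply: fiber_min_le Hu _; apply/G_feasible0.
Qed.

Lemma lattice_basis_inj B (z : 'cV[int]_(n - d)) :
  lattice_basis A B -> B *m z = 0 -> z = 0.
Proof.
move=> [_ HB] Bz0; have [z0 [_ z0_uniq]] := HB 0 (mulmx0 _ _).
by rewrite -(z0_uniq z) ?Bz0 //; apply: z0_uniq; rewrite mulmx0.
Qed.

Lemma Qbar_toR (R : realType) B t u z :
  @Qbar R d n c B t u (toR R z) <->
  (forall i, i \notin t -> (B *m z) i 0 <= u i 0) /\ 0 <= cdot c (B *m z).
Proof.
rewrite /Qbar /cdot mulmxA -!toR_mul mulNmx -toR_mul.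
rewrite [X in X <= 0]mxE toRE oppr_le0 ler0z.
by split=> -[Hle Hc]; split=> // i it; move: (Hle i it); rewrite toRE ler_int.
Qed.

Lemma Q_Qbar0 (R : realType) B u z :
  @Q R d n c B u z <-> @Qbar R d n c B set0 u z.
Proof.
by split=> -[Hle Hc]; split=> // i; apply: Hle; rewrite in_set0.
Qed.

Lemma int_points_trivial_Q (R : realType) B u :
  @int_points_trivial R d n (@Q R d n c B u) <->
  @int_points_trivial R d n (@Qbar R d n c B set0 u).
Proof. by split=> Htriv z; rewrite -Htriv Q_Qbar0. Qed.

Lemma int_points_trivial_Qbar (R : realType) B t u :
  lattice_basis A B -> nonneg_vec u ->
  @int_points_trivial R d n (@Qbar R d n c B t u) <-> fiber_unique_min t u.
Proof.
move=> HB u0; have [AB0 Hker] := HB.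
split=> [Htriv x [Ax xt] le | Hu z].
  have [|z [Bz _]] := Hker (u - x); first by rewrite mulmxBr Ax subrr.
  suff z0 : z = 0 by apply/esym/eqP; rewrite -subr_eq0 Bz z0 mulmx0.
  apply/Htriv/Qbar_toR; rewrite -Bz cdotB subr_ge0; split=> // i it.
  by rewrite !mxE lerBlDr lerDl xt.
rewrite Qbar_toR; split=> [[Hle Hc] | ->]; last first.
  by rewrite mulmx0 /cdot mulmx0 mxE; split=> // i _; rewrite mxE u0.
have Fx : G_feasible A t (A *m u) (u - B *m z).
  split=> [|i it]; first by rewrite mulmxBr mulmxA AB0 mul0mx subr0.
  by rewrite mxE [X in _ + X]mxE subr_ge0 Hle.
apply: lattice_basis_inj HB _.
by rewrite -(subKr u (B *m z)) (Hu _ Fx) ?subrr // cdotB lerBlDr lerDl.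
Qed.

Lemma G_solves_iff_fiber_unique_min (R : realType) s t u :
  (forall x x', A *m x = A *m x' ->
     (Gobj R A c s t x <= Gobj R A c s t x') = (cdot c x <= cdot c x')) ->
  nonneg_vec u -> fiber_unique_min set0 u ->
  G_solves R A c s t (A *m u) <-> fiber_unique_min t u.
Proof.
move=> Gle u0 Hu; have Fu : G_feasible A t (A *m u) u by split=> // j _.
split=> [[[xs [Fxs Hxs]] Hall] x Fx le | Ht].
  have le_u_xs : cdot c u <= cdot c xs.
    apply: fiber_min_le Hu _; apply/G_feasible0.
    by split; [exact: Hall | exact: Fxs.1].
  have Gx : G_optimal R A c s t (A *m u) x.
    split=> // x' Fx'; rewrite Gle ?Fx.1 ?Fx'.1 //.
    by rewrite (le_trans le) // (le_trans le_u_xs) // -Gle ?Fxs.1 ?Fx'.1 //; apply: Hxs.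
  by apply: Hu le; apply/G_feasible0; split; [exact: Hall Gx | exact: Fx.1].
split=> [|x [Fx Hx]].
  by exists u; split=> // x Fx; rewrite Gle ?Fx.1 //; apply: fiber_min_le Ht Fx.
by move: (Hx u Fu); rewrite Gle ?Fx.1 // => /(Ht x Fx) ->.
Qed.

End Fibers.

Lemma exists_functional_vanishing_on (R : realFieldType) d n (M : 'M[R]_(d, n))
    (s : {set 'I_n}) :
  row_free M -> (#|s| < d)%N ->
  exists v : 'rV_d, exists2 j0, 0 < (v *m M) 0 j0 &
    forall j, j \in s -> (v *m M) 0 j = 0.
Proof.
move=> freeM lt_sd; pose Ms := colsub (fun k : 'I_#|s| => enum_val k) M.
have : kermx Ms != 0.
  rewrite -mxrank_eq0 mxrank_ker subn_eq0 -ltnNge.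
  exact: leq_ltn_trans (rank_leq_col Ms) lt_sd.
case/rowV0Pn => w /sub_kermxP wMs0 w0.
have : w *m M != 0 by rewrite mulmx_free_eq0.
case/matrix0Pn => i [j0]; rewrite [i]ord1 => wMj0.
exists (((w *m M) 0 j0) *: w); exists j0 => [|j js].
  by rewrite -scalemxAl mxE -expr2 exprn_even_gt0 //= wMj0.
move/matrixP: wMs0 => /(_ 0 (enum_rank_in js j)).
by rewrite mulmx_colsub mxE enum_rankK_in // -scalemxAl !mxE => ->; rewrite mulr0.
Qed.

Lemma conform_mx_solve (F : fieldType) d m (M : 'M[F]_(d, m)) (y : 'rV[F]_d) :
  m = d -> \rank M = m ->
  conform_mx (0 : 'rV_d) (y *m M) *m invmx (conform_mx 1%:M M) = y.
Proof.
move=> md; subst m => rkM.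
by rewrite !conform_mx_id mulmxK // -row_free_unit /row_free rkM.
Qed.

Section LowerFaces.
Variables (R : realType) (d n : nat) (A : 'M[int]_(d, n)) (c : 'rV[int]_n).

(* [in_Delta R A c s] is convertible to [exists y, face_normal s y]. *)
Definition face_normal (s : {set 'I_n}) (y : 'rV[R]_d) : Prop :=
  forall j : 'I_n,
    (j \in s -> (y *m toR R A) 0 j = (c 0 j)%:~R) /\
    (j \notin s -> (y *m toR R A) 0 j < (c 0 j)%:~R).

Lemma tight_set_in_Delta (y : 'rV[R]_d) :
  (forall j, (y *m toR R A) 0 j <= (c 0 j)%:~R) ->
  in_Delta R A c [set j | (y *m toR R A) 0 j == (c 0 j)%:~R].
Proof.
move=> Hle; exists y => j; rewrite inE.
by split=> [/eqP // | ne]; rewrite lt_neqAle ne Hle.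
Qed.

Lemma face_normal_grow s y (v : 'rV[R]_d) j0 :
  face_normal s y -> 0 < (v *m toR R A) 0 j0 ->
  (forall j, j \in s -> (v *m toR R A) 0 j = 0) ->
  exists2 s', in_Delta R A c s' & s \proper s'.
Proof.
move=> Hy vj0 vs.
pose a j := (v *m toR R A) 0 j; pose g j := (c 0 j)%:~R - (y *m toR R A) 0 j.
have [k ak min_k] := @arg_minP _ _ _ j0 (fun j => 0 < a j) (fun j => g j / a j) vj0.
(* ratio test: [t] is the largest step keeping [y + t v] below [c] *)
pose t := g k / a k; pose y' := y + t *: v.
have g_gt0 j : j \notin s -> 0 < g j by move=> js; rewrite subr_gt0 (Hy j).2.
have a_s j : j \in s -> a j = 0 := vs j.
have ks : k \notin s by apply: contraTN ak => /a_s ->; rewrite ltxx.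
have y'E j : (y' *m toR R A) 0 j = (y *m toR R A) 0 j + t * a j.
  by rewrite mulmxDl -scalemxAl mxE [X in _ + X]mxE.
have y'_le j : (y' *m toR R A) 0 j <= (c 0 j)%:~R.
  rewrite y'E -lerBrDl; case: (boolP (j \in s)) => [js | jns].
    by rewrite a_s // mulr0 (Hy j).1 // subrr.
  case: (ltP 0 (a j)) => aj; first by rewrite -ler_pdivlMr // min_k.
  by rewrite (le_trans _ (ltW (g_gt0 j jns))) // mulr_ge0_le0 // ltW ?divr_gt0 ?g_gt0.
exists [set j | (y' *m toR R A) 0 j == (c 0 j)%:~R]; first exact: tight_set_in_Delta.
rewrite properE; apply/andP; split.
  by apply/subsetP => j js; rewrite inE y'E a_s // mulr0 addr0 (Hy j).1.
apply/subsetPn; exists k => //.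
by rewrite inE y'E /t divfK ?lt0r_neq0 // addrC subrK.
Qed.

Lemma maximal_face_card s :
  row_free (toR R A) -> Delta_triangulation R A c -> maximal_face R A c s ->
  #|s| = d.
Proof.
move=> freeA tri [[y Hy] smax].
have : (#|s| <= d)%N by rewrite -(tri s (ex_intro _ y Hy)) rank_leq_row.
rewrite leq_eqVlt => /orP [/eqP // | lt_sd].
have [v [j0 vj0 vs]] := exists_functional_vanishing_on freeA lt_sd.
have [s' Ds' ss'] := face_normal_grow Hy vj0 vs.
by move: (ss'); rewrite (smax s' Ds' (proper_sub ss')) properxx.
Qed.

Lemma ctilde_face_normal (s : {set 'I_n}) y :
  #|s| = d -> \rank (Asub R A s) = #|s| -> face_normal s y ->
  forall j, ctilde R A c s j = (c 0 j)%:~R - (y *m toR R A) 0 j.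
Proof.
move=> cs rks Hy j.
have yAs : csub R c s = y *m Asub R A s.
  apply/matrixP => i k; rewrite [i]ord1 mulmx_colsub /csub [RHS]mxE [LHS]mxE.
  by rewrite toRE (Hy _).1 // enum_valP.
rewrite /ctilde /csq /Asq yAs conform_mx_solve //.
by case: ifP => // js; rewrite (Hy j).1 // subrr.
Qed.

Lemma Gobj_face_normal (s t : {set 'I_n}) (y : 'rV[R]_d) x :
  t \subset s ->
  (forall j, ctilde R A c s j = (c 0 j)%:~R - (y *m toR R A) 0 j) ->
  Gobj R A c s t x = (cdot c x)%:~R - (y *m toR R (A *m x)) 0 0.
Proof.
move=> ts Hct; rewrite /Gobj.
transitivity (\sum_j ctilde R A c s j * (x j 0)%:~R).
  rewrite [RHS](bigID (mem t)) /= [X in _ = X + _]big1 ?add0r // => j jt.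
  by rewrite /ctilde (subsetP ts j jt) mul0r.
rewrite /cdot toR_mul mulmxA !mxE rmorph_sum -sumrB.
by apply: eq_bigr => j _; rewrite Hct mulrBl rmorphM toRE.
Qed.

Lemma Gobj_le_fiber (s t : {set 'I_n}) x x' :
  row_free (toR R A) -> Delta_triangulation R A c -> maximal_face R A c s ->
  t \subset s -> A *m x = A *m x' ->
  (Gobj R A c s t x <= Gobj R A c s t x') = (cdot c x <= cdot c x').
Proof.
move=> freeA tri smax ts Axx'; have [[y Hy] _] := smax.
have Hct := ctilde_face_normal (maximal_face_card freeA tri smax)
  (tri s (ex_intro _ y Hy)) Hy.
by rewrite !(Gobj_face_normal _ ts Hct) Axx' lerD2r ler_int.
Qed.

End LowerFaces.

Theorem lemma2p9 (R : realType) (d n : nat) (A : 'M[int]_(d, n))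
    (c : 'rV[int]_n) (B : 'M[int]_(n, n - d)) :
  \rank (toR R A) = d ->
  cone_pointed R A ->
  nonneg_kernel_trivial R A ->
  lattice_full A ->
  generic R A c ->
  lattice_basis A B ->
  (forall u : 'cV[int]_n, nonneg_vec u ->
     (Oc A c u <-> @int_points_trivial R d n (@Q R d n c B u))) /\
  (forall (u : 'cV[int]_n) (tau sigma : {set 'I_n}),
     Oc A c u -> in_Delta R A c tau -> maximal_face R A c sigma ->
     tau \subset sigma ->
     (G_solves R A c sigma tau (A *m u) <->
      @int_points_trivial R d n (@Qbar R d n c B tau u))).
Proof.
move=> rkA _ _ _ [tri uniq_opt] HB.
have freeA : row_free (toR R A) by rewrite /row_free rkA.
split=> [u u0 | u t s Ou _ smax ts].
  rewrite int_points_trivial_Q (int_points_trivial_Qbar _ _ _ HB u0).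
  exact: Oc_iff_fiber_unique_min.
have u0 : nonneg_vec u by case: Ou => b [_ []].
have Hu : fiber_unique_min A c set0 u by apply/(Oc_iff_fiber_unique_min uniq_opt u0).
rewrite (int_points_trivial_Qbar _ _ _ HB u0).
by apply: G_solves_iff_fiber_unique_min u0 Hu => x x'; apply: Gobj_le_fiber.
Qed.
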